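(* For every $n$, every linear 3-uniform hypergraph on $n$ vertices that contains neither $\mathcal{W}^3$ nor $F_7$ as an induced subgraph has at most $\frac{n^2}{9}$ edges; that is, $\mathrm{ex}_{\mathrm{lin,ind}}(n,\{\mathcal{W}^3,F_7\})\le \frac{n^2}{9}$. Moreover, equality holds for infinitely many $n$.
   Context: A 3-uniform hypergraph is linear if any two distinct edges share at most one vertex. $\mathrm{ex}_{\mathrm{lin,ind}}(n,\mathcal{G})$ is the maximum number of edges of an $n$-vertex linear 3-uniform hypergraph containing no member of $\mathcal{G}$ as an induced subgraph (a vertex subset whose induced subhypergraph is isomorphic to that member). Here $\mathcal{W}^3$ denotes the hypergraph on vertices $\{1,\dots,6\}$ with edges $\{1,2,3\},\{3,4,5\},\{5,6,1\}$ (a linear 3-cycle), and $F_7$ denotes the Fano plane: the hypergraph on the 7 nonzero vectors of $\mathbb{F}_2^3$ whose edges are the triples $\{x,y,z\}$ of distinct vectors with $x+y+z=0$. *)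

From HB Require Import structures.
From mathcomp Require Import all_boot all_order all_algebra.
Set Implicit Arguments. Unset Strict Implicit. Unset Printing Implicit Defensive.
Import GRing.Theory.

Definition uniform3 (V : finType) (E : {set {set V}}) : Prop :=
  forall e, e \in E -> #|e| = 3.

Definition linear_hg (V : finType) (E : {set {set V}}) : Prop :=
  forall e f, e \in E -> f \in E -> e != f -> #|e :&: f| <= 1.

(* H (on vertex type W) is an induced subhypergraph of G (on V): there is an
   injection f : W -> V such that a vertex subset S of W is an edge of H iff
   its image f(S) is an edge of G, i.e. the subhypergraph of G induced on
   f(W) is isomorphic to H via f. *)
Definition induced_sub (W V : finType) (H : {set {set W}}) (G : {set {set V}}) : Prop :=
  exists f : W -> V, injective f /\ forall S : {set W}, (S \in H) = (f @: S \in G).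

(* W^3 on vertices {1..6} (here 0..5): edges {1,2,3},{3,4,5},{5,6,1}. *)
Definition W3 : {set {set 'I_6}} :=
  [set [set (inord 0 : 'I_6); inord 1; inord 2];
       [set (inord 2 : 'I_6); inord 3; inord 4];
       [set (inord 4 : 'I_6); inord 5; inord 0]].

Definition fano_pt := {x : 'rV['F_2]_3 | x != 0%R}.

Definition F7 : {set {set fano_pt}} :=
  [set e : {set fano_pt} | [exists x : fano_pt, exists y : fano_pt, exists z : fano_pt,
     [&& e == [set x; y; z], x != y, y != z, x != z &
         (val x + val y + val z)%R == 0%R]]].

From mathcomp Require Import all_boot all_order all_algebra.
Set Implicit Arguments. Unset Strict Implicit. Unset Printing Implicit Defensive.
Import GRing.Theory.

(* In a linear triple system with no induced W^3 every triangle of edges closes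
   into a Pasch configuration.  If a vertex w were adjacent to all three vertices of an edge
   {x, y, z}, through edges {x, w, a}, {y, w, b}, {z, w, c}, three Pasch closures would add the
   edges {z, a, b}, {y, a, c}, {x, b, c}: a Fano plane, which linearity forces to be induced.
   So every vertex is adjacent to at most two vertices of each edge, and double counting gives
   sum_(v in e) deg v <= n for every edge e, hence sum_v (deg v)^2 <= n |E|.  Cauchy-Schwarz
   with sum_v deg v = 3 |E| yields 9 |E| <= n^2.
   Equality holds for the triples {(0, a), (1, b), (2, c)} of 'I_3 * F_2^N with a + b + c = 0:
   they form a linear system with 4^N edges on 3 * 2^N vertices; it is Pasch-closed, hence
   W^3-free, since F_2^N has exponent 2, and it is F_7-free because any two points of F_7 are
   collinear while the edges are transversal to only three classes. *)

Lemma card_set3 (T : finType) (x y z : T) :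
  x != y -> x != z -> y != z -> #|[set x; y; z]| = 3.
Proof. by move=> xy xz yz; rewrite -setUA cardsU1 cards2 !inE negb_or xy xz yz. Qed.

Lemma uniq_of_card_set3 (T : finType) (x y z : T) :
  #|[set x; y; z]| = 3 -> uniq [:: x; y; z].
Proof.
move=> card3; apply/card_uniqP; rewrite /= -card3.
by apply: eq_card => t; rewrite !inE orbA.
Qed.

Lemma imset_set3 (T U : finType) (f : T -> U) x y z :
  f @: [set x; y; z] = [set f x; f y; f z].
Proof. by rewrite !(imsetU, imsetU1, imset_set1). Qed.

Lemma set3_perm (T : finType) (F : {set {set T}}) a b c : [set a; b; c] \in F ->
  [/\ [set a; c; b] \in F, [set b; a; c] \in F, [set b; c; a] \in F,
      [set c; a; b] \in F & [set c; b; a] \in F].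
Proof.
move=> abc; have perm (s : {set T}) : s =i [set a; b; c] -> s \in F by move/setP ->.
by split; apply: perm => t; rewrite !inE; do 3!case: (t == _).
Qed.

Lemma big_set3 (R : Type) (idx : R) (op : Monoid.com_law idx) (T : finType) (F : T -> R)
    x y z : x != y -> x != z -> y != z ->
  \big[op/idx]_(v in [set x; y; z]) F v = op (op (F x) (F y)) (F z).
Proof.
move=> xy xz yz; rewrite -setUA big_setU1 ?big_setU1 ?big_set1 ?Monoid.mulmA //;
  by rewrite !inE ?negb_or ?xy ?xz ?yz.
Qed.

Lemma card_set_cond (T : finType) (A : {pred T}) (P : pred T) :
  #|[set x in A | P x]| = \sum_(x in A) P x.
Proof. by rewrite -sum1dep_card big_mkcondr; apply: eq_bigr => x _; case: (P x). Qed.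

Lemma sum_mem_card (T : finType) (A : {pred T}) : \sum_x (x \in A : nat) = #|A|.
Proof. by rewrite -sum1_card [RHS]big_mkcond; apply: eq_bigr => x _; case: (x \in A). Qed.

Lemma leq_sqr_sum (T : finType) (d : T -> nat) :
  (\sum_i d i) ^ 2 <= #|T| * \sum_i d i ^ 2.
Proof.
rewrite -(leq_pmul2l (isT : 0 < 2)).
have -> : 2 * (\sum_i d i) ^ 2 = \sum_i \sum_j 2 * (d i * d j).
  rewrite -mulnn big_distrl /= big_distrr /=; apply: eq_bigr => i _.
  by rewrite big_distrr /= big_distrr.
apply: (@leq_trans (\sum_i \sum_j (d i ^ 2 + d j ^ 2))).
  by apply: leq_sum => i _; apply: leq_sum => j _; case: (nat_Cauchy (d i) (d j)).
have sum_const c : \sum_(j : T) c = #|T| * c by rewrite -sum_nat_const; apply: eq_bigl.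
under eq_bigr => i _ do rewrite big_split /= sum_const.
by rewrite big_split /= sum_const -big_distrr /= mul2n -addnn.
Qed.

(** * Pasch configurations and W^3 *)

Notation O6 k := (@Ordinal 6 k isT).

Lemma card_set_ord6 (S : {set 'I_6}) : #|S| =
  (O6 0 \in S) + (O6 1 \in S) + (O6 2 \in S) + (O6 3 \in S) + (O6 4 \in S) + (O6 5 \in S).
Proof.
rewrite -sum1_card big_mkcond /= !big_ord_recl big_ord0 addn0 !addnA.
by do 5?[congr (_ + _)]; congr (nat_of_bool (_ \in S)); apply: val_inj.
Qed.

Lemma W3E :
  W3 = [set [set O6 0; O6 1; O6 2]; [set O6 2; O6 3; O6 4]; [set O6 4; O6 5; O6 0]].
Proof.
have inordE k (lt_k6 : k < 6) : inord k = Ordinal lt_k6 by apply/val_inj/inordK.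
by rewrite /W3 !(inordE 0 isT, inordE 1 isT, inordE 2 isT, inordE 3 isT, inordE 4 isT,
  inordE 5 isT).
Qed.

Lemma W3_transversal (S : {set 'I_6}) : #|S| = 3 ->
    #|S :&: [set O6 0; O6 1; O6 2]| <= 1 -> #|S :&: [set O6 2; O6 3; O6 4]| <= 1 ->
    #|S :&: [set O6 4; O6 5; O6 0]| <= 1 ->
  S = [set O6 1; O6 3; O6 5].
Proof.
rewrite !card_set_ord6 !inE /=.
case S0: (O6 0 \in S); case S1: (O6 1 \in S); case S2: (O6 2 \in S);
case S3: (O6 3 \in S); case S4: (O6 4 \in S); case S5: (O6 5 \in S) => //= *.
by apply/setP => -[[|[|[|[|[|[|//]]]]]] lt_i6]; rewrite !inE (bool_irrelevance lt_i6 isT).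
Qed.

Definition pasch_closed (V : finType) (E : {set {set V}}) : Prop :=
  forall p1 p2 p3 p4 p5 p6 : V, uniq [:: p1; p2; p3; p4; p5; p6] ->
  [set p1; p2; p3] \in E -> [set p3; p4; p5] \in E -> [set p5; p6; p1] \in E ->
  [set p2; p4; p6] \in E.

Lemma pasch_closed_W3_free (V : finType) (E : {set {set V}}) :
  pasch_closed E -> ~ induced_sub W3 E.
Proof.
move=> closed [f [f_inj fE]].
have f_uniq : uniq [:: f (O6 0); f (O6 1); f (O6 2); f (O6 3); f (O6 4); f (O6 5)].
  by rewrite (map_inj_uniq f_inj [:: O6 0; O6 1; O6 2; O6 3; O6 4; O6 5]).
have W3f i j k : [set i; j; k] \in W3 -> [set f i; f j; f k] \in E by rewrite fE imset_set3.
have /negP[] : [set O6 1; O6 3; O6 5] \notin W3.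
  rewrite W3E !inE -orbA; apply/or3P => -[] /eqP/setP;
    [move/(_ (O6 3)) | move/(_ (O6 1)) | move/(_ (O6 1))]; by rewrite !inE.
rewrite fE imset_set3; apply: closed f_uniq _ _ _; apply: W3f; by rewrite W3E !inE eqxx ?orbT.
Qed.

(** * The Fano plane *)

Notation O3 k := (@Ordinal 3 k isT).

Lemma ord3_cases (j : 'I_3) : [\/ j = O3 0, j = O3 1 | j = O3 2].
Proof.
by case: j => -[|[|[|//]]] lt_j3; [constructor 1 | constructor 2 | constructor 3]; apply: val_inj.
Qed.

Lemma ord3_other_eq (i j k l : 'I_3) :
  i != j -> k != i -> k != j -> l != i -> l != j -> k = l.
Proof.
by case: (ord3_cases i) => ->; case: (ord3_cases j) => ->; case: (ord3_cases k) => ->;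
  case: (ord3_cases l) => ->.
Qed.

Lemma F2_cases (u : 'F_2) : u = 0%R \/ u = 1%R.
Proof. by case: u => -[|[|//]] lt_u2; [left | right]; exact: val_inj. Qed.

Lemma F2mx_addrr m n (A : 'M['F_2]_(m, n)) : (A + A = 0)%R.
Proof. by apply/matrixP => i j; rewrite !mxE addrr_pchar2 // pchar_Fp. Qed.

Lemma F2mx_opp m n (A : 'M['F_2]_(m, n)) : (- A = A)%R.
Proof. by apply/eqP; rewrite eq_sym -addr_eq0 F2mx_addrr. Qed.

Definition fano_bits (p : fano_pt) : bool * bool * bool :=
  (val p ord0 (O3 0) != 0%R, val p ord0 (O3 1) != 0%R, val p ord0 (O3 2) != 0%R).

Definition xor3 (s t : bool * bool * bool) : bool * bool * bool :=
  (s.1.1 (+) t.1.1, s.1.2 (+) t.1.2, s.2 (+) t.2).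

Lemma fano_bits_inj : injective fano_bits.
Proof.
have F2_eq (u v : 'F_2) : (u != 0%R) = (v != 0%R) -> u = v.
  by case: (F2_cases u) => ->; case: (F2_cases v) => ->.
move=> p q [bits0 bits1 bits2]; apply/val_inj/rowP => j.
by case: (ord3_cases j) => ->; apply: F2_eq.
Qed.

Lemma fano_bits_neq0 p : fano_bits p != (false, false, false).
Proof.
apply: contra (valP p) => /eqP [/negbFE/eqP p0 /negbFE/eqP p1 /negbFE/eqP p2].
by apply/eqP/rowP => j; rewrite mxE; case: (ord3_cases j) => ->.
Qed.

Lemma fano_bits_line (p q r : fano_pt) : (val p + val q + val r == 0)%R ->
  fano_bits r = xor3 (fano_bits p) (fano_bits q).
Proof.
have F2_sum (u v t : 'F_2) : (u + v + t = 0)%R -> (t != 0%R) = (u != 0%R) (+) (v != 0%R).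
  by case: (F2_cases u) => ->; case: (F2_cases v) => ->; case: (F2_cases t) => ->.
move=> /eqP/rowP pqr_eq0.
have bit j : (val r ord0 j != 0%R) = (val p ord0 j != 0%R) (+) (val q ord0 j != 0%R).
  by apply: F2_sum; move: (pqr_eq0 j); rewrite !mxE.
by rewrite /fano_bits /xor3 /= !bit.
Qed.

Lemma fano_line (p q : fano_pt) : p != q -> exists2 L, L \in F7 & (p \in L) && (q \in L).
Proof.
move=> pq; have pq_neq0 : (val p + val q != 0)%R.
  by rewrite addr_eq0 F2mx_opp; apply: contra pq => /eqP/val_inj ->.
pose r : fano_pt := exist (fun x => x != 0%R) _ pq_neq0.
exists [set p; q; r]; last by rewrite !inE !eqxx ?orbT.
have qr : q != r.
  apply: contraNneq (valP p) => /(congr1 val) /= /eqP.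
  by rewrite -{1}[val q]add0r (inj_eq (addIr _)) eq_sym.
have pr : p != r.
  apply: contraNneq (valP q) => /(congr1 val) /= /eqP.
  by rewrite -{1}[val p]addr0 (inj_eq (addrI _)) eq_sym.
rewrite inE; apply/existsP; exists p; apply/existsP; exists q; apply/existsP; exists r.
by rewrite eqxx pq qr pr /= F2mx_addrr.
Qed.

Lemma card_fano_pt : #|{: fano_pt}| = 7.
Proof.
rewrite card_sig (eq_card (B := predC1 0%R)) // cardC1 card_mx card_Fp //.
Qed.

(** * The upper bound *)

Definition adj (V : finType) (E : {set {set V}}) (u v : V) : bool :=
  (u != v) && [exists e in E, (u \in e) && (v \in e)].

Definition deg (V : finType) (E : {set {set V}}) (v : V) : nat := #|[set e in E | v \in e]|.

Section LinearTripleSystem.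

Variables (V : finType) (E : {set {set V}}).
Hypotheses (E_uniform : uniform3 E) (E_linear : linear_hg E).
Hypotheses (E_W3_free : ~ induced_sub W3 E) (E_F7_free : ~ induced_sub F7 E).

Lemma edge_eq e f u v : e \in E -> f \in E -> u != v ->
  u \in e -> v \in e -> u \in f -> v \in f -> e = f.
Proof.
move=> eE fE uv ue ve uf vf; apply: contraTeq uv => /(E_linear eE fE)/card_le1_eqP.
by move=> /(_ u v); rewrite !inE ue uf ve vf => /(_ isT isT) ->; rewrite negbK.
Qed.

Lemma edge_third e u v : e \in E -> u \in e -> v \in e -> u != v ->
  exists t, [/\ e = [set u; v; t], t != u & t != v].
Proof.
move=> eE ue ve uv.
have /cards1P [t et] : #|e :\ u :\ v| == 1.
  move: (E_uniform eE); rewrite (cardsD1 u) (cardsD1 v (e :\ u)) !inE eq_sym uv ue ve.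
  by move=> /eqP; rewrite /= !add1n !eqSS.
have : t \in e :\ u :\ v by rewrite et set11.
rewrite !inE => /and3P [tv tu te]; exists t; split=> //.
have [ut vt] : u != t /\ v != t by rewrite !(eq_sym _ t).
apply/esym/eqP; rewrite eqEcard card_set3 // (E_uniform eE) leqnn andbT.
by apply/subsetP => s; rewrite !inE -orbA => /or3P [] /eqP ->.
Qed.

Lemma induced_sub_of_lines (W : finType) (H : {set {set W}}) (f : W -> V) :
    (forall p q, p != q -> exists2 L, L \in H & (p \in L) && (q \in L)) ->
    injective f -> {in H, forall L : {set W}, f @: L \in E} ->
  induced_sub H E.
Proof.
move=> H_lines f_inj fH; exists f; split=> // S; apply/idP/idP; first exact: fH.
move=> fSE; have /card_gt1P [p [q [pS qS pq]]] : 1 < #|S|.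
  by rewrite -(card_imset _ f_inj) E_uniform.
have [L LH /andP [pL qL]] := H_lines p q pq.
suff -> : S = L by [].
apply: (imset_inj f_inj); apply: (edge_eq (u := f p) (v := f q) fSE (fH L LH));
  by rewrite ?imset_f ?(inj_eq f_inj).
Qed.

Lemma pasch_closed_of_W3_free : pasch_closed E.
Proof.
move=> p1 p2 p3 p4 p5 p6 p_uniq e123 e345 e561.
apply/negPn/negP => e246; apply: E_W3_free.
pose f (i : 'I_6) := nth p1 [:: p1; p2; p3; p4; p5; p6] i.
have f_inj : injective f by move=> i j /eqP; rewrite nth_uniq // => /eqP/val_inj.
exists f; split=> // S; rewrite W3E !inE.
have [-> | S1] := eqVneq S [set O6 0; O6 1; O6 2]; first by rewrite imset_set3.
have [-> | S2] := eqVneq S [set O6 2; O6 3; O6 4]; first by rewrite imset_set3.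
have [-> | S3] := eqVneq S [set O6 4; O6 5; O6 0]; first by rewrite imset_set3.
apply/esym/negP => fSE.
have meet (A : {set 'I_6}) : f @: A \in E -> S != A -> #|S :&: A| <= 1.
  move=> fAE SA; rewrite -(card_imset _ f_inj) imsetI; last by move=> ? ? _ _ /f_inj.
  by apply: E_linear; rewrite // (inj_eq (imset_inj f_inj)).
have S135 : S = [set O6 1; O6 3; O6 5].
  by apply: W3_transversal; rewrite ?meet ?imset_set3 // -(card_imset _ f_inj) E_uniform.
by move: e246; rewrite (_ : [set p2; p4; p6] = f @: S) ?fSE // S135 imset_set3.
Qed.

Lemma fano_induced x y z w a b c : uniq [:: x; y; z; w; a; b; c] ->
    [set x; y; z] \in E -> [set x; w; a] \in E -> [set y; w; b] \in E ->
    [set z; w; c] \in E -> [set z; a; b] \in E -> [set y; a; c] \in E ->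
    [set x; b; c] \in E ->
  induced_sub F7 E.
Proof.
move=> pts_uniq exyz exwa eywb ezwc ezab eyac exbc.
(* [h] sends the coordinate vector of a Fano point to its image; (0, 0, 0) is not a point. *)
pose h (s : bool * bool * bool) : V := match s with
  | (true, false, false) => x | (false, true, false) => y | (true, true, false) => z
  | (false, false, true) => w | (true, false, true) => a | (false, true, true) => b
  | (true, true, true) => c | (false, false, false) => x end.
have h_inj s t : s != (false, false, false) -> t != (false, false, false) ->
    h s = h t -> s = t.
  by case: s t => [[[] []] []] [[[] []] []] //= _ _ st;
    move: pts_uniq; rewrite st /= !inE eqxx ?orbT ?andbF.
have h_lines s t : s != (false, false, false) -> t != (false, false, false) -> s != t ->
    [set h s; h t; h (xor3 s t)] \in E.
  have [? ? ? ? ?] := set3_perm exyz; have [? ? ? ? ?] := set3_perm exwa.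
  have [? ? ? ? ?] := set3_perm eywb; have [? ? ? ? ?] := set3_perm ezwc.
  have [? ? ? ? ?] := set3_perm ezab; have [? ? ? ? ?] := set3_perm eyac.
  have [? ? ? ? ?] := set3_perm exbc.
  by case: s t => [[[] []] []] [[[] []] []].
apply: (@induced_sub_of_lines _ _ (h \o fano_bits) fano_line).
  by move=> p q /h_inj/fano_bits_inj; apply; apply: fano_bits_neq0.
move=> L; rewrite inE => /existsP [p /existsP [q /existsP [r]]].
case/and5P=> /eqP -> pq qr pr /fano_bits_line pqr.
rewrite imset_set3 /comp pqr h_lines ?fano_bits_neq0 // (inj_eq fano_bits_inj) //.
Qed.

Lemma fano_induced_of_spokes x y z w a b c : uniq [:: x; y; z; w; a; b; c] ->
    [set x; y; z] \in E -> [set x; w; a] \in E -> [set y; w; b] \in E ->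
    [set z; w; c] \in E ->
  induced_sub F7 E.
Proof.
move=> pts_uniq exyz exwa eywb ezwc.
have sub_uniq (s : seq nat) : uniq s -> all (gtn 7) s ->
    uniq [seq nth x [:: x; y; z; w; a; b; c] i | i <- s].
  move=> s_uniq /allP s_lt7; rewrite map_inj_in_uniq // => i j /s_lt7 ? /s_lt7 ?.
  by move/eqP; rewrite nth_uniq // => /eqP.
have [? ? ? ? ?] := set3_perm exyz; have [? ? ? ? ?] := set3_perm exwa.
have [? ? ? ? ?] := set3_perm eywb; have [? ? ? ? ?] := set3_perm ezwc.
have closed := pasch_closed_of_W3_free.
have ezab : [set z; a; b] \in E by apply: closed (sub_uniq [:: 1; 2; 0; 4; 3; 5] isT isT) _ _ _.
have eyac : [set y; a; c] \in E by apply: closed (sub_uniq [:: 2; 1; 0; 4; 3; 6] isT isT) _ _ _.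
have exbc : [set x; b; c] \in E by apply: closed (sub_uniq [:: 2; 0; 1; 5; 3; 6] isT isT) _ _ _.
exact: fano_induced pts_uniq exyz exwa eywb ezwc ezab eyac exbc.
Qed.

Lemma off_edge_meet e f w u v : e \in E -> f \in E -> w \notin e -> w \in f ->
  u \in e -> v \in e -> u \in f -> v \in f -> u = v.
Proof.
move=> eE fE wNe wf ue ve uf vf; apply/eqP; apply: contraNT wNe => uv.
by rewrite (edge_eq eE fE uv).
Qed.

Lemma spoke e f w x : e \in E -> f \in E -> w \notin e -> x \in e -> w \in f -> x \in f ->
  exists a, [/\ f = [set x; w; a], a \notin e & a != w].
Proof.
move=> eE fE wNe xe wf xf; have xw : x != w by apply: contraNneq wNe => <-.
have [a [f_def ax aw]] := edge_third fE xf wf xw.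
exists a; split=> //; apply: contra ax => ae.
by apply/eqP/(off_edge_meet eE fE wNe wf ae xe); rewrite f_def !inE eqxx ?orbT.
Qed.

Lemma spokes_meet e f g w x y t : e \in E -> f \in E -> g \in E -> w \notin e ->
    x \in e -> y \in e -> x != y -> w \in f -> x \in f -> w \in g -> y \in g ->
  t \in f -> t \in g -> t = w.
Proof.
move=> eE fE gE wNe xe ye xy wf xf wg yg tf tg; apply/eqP; apply: contraTT xy => tw.
have fg : f = g := edge_eq fE gE tw tf wf tg wg.
by rewrite negbK (off_edge_meet eE gE wNe wg xe ye) // -fg.
Qed.

Lemma no_common_neighbour x y z w : [set x; y; z] \in E -> x != y -> x != z -> y != z ->
  ~~ [&& adj E x w, adj E y w & adj E z w].
Proof.
move=> exyz xy xz yz; apply/negP; case/and3P.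
move=> /andP [xw /existsP [fx /and3P [fxE xfx wfx]]].
move=> /andP [yw /existsP [fy /and3P [fyE yfy wfy]]].
move=> /andP [zw /existsP [fz /and3P [fzE zfz wfz]]].
set e := [set x; y; z] in exyz.
have [xe ye ze] : [/\ x \in e, y \in e & z \in e] by rewrite !inE !eqxx ?orbT.
have wNe : w \notin e by rewrite !inE !negb_or ![w == _]eq_sym xw yw zw.
have [a [fx_def aNe aw]] := spoke exyz fxE wNe xe wfx xfx.
have [b [fy_def bNe bw]] := spoke exyz fyE wNe ye wfy yfy.
have [c [fz_def cNe cw]] := spoke exyz fzE wNe ze wfz zfz.
have [afx bfy cfz] : [/\ a \in fx, b \in fy & c \in fz].
  by rewrite fx_def fy_def fz_def !inE !eqxx ?orbT.
have ab : a != b.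
  apply: contraNneq aw => ab.
  by apply/eqP/(spokes_meet exyz fxE fyE wNe xe ye xy wfx xfx wfy yfy afx); rewrite ab.
have ac : a != c.
  apply: contraNneq aw => ac.
  by apply/eqP/(spokes_meet exyz fxE fzE wNe xe ze xz wfx xfx wfz zfz afx); rewrite ac.
have bc : b != c.
  apply: contraNneq bw => bc.
  by apply/eqP/(spokes_meet exyz fyE fzE wNe ye ze yz wfy yfy wfz zfz bfy); rewrite bc.
have neq_off u t : u \in e -> t \notin e -> u != t by move=> ue; apply: contraNneq => <-.
rewrite fx_def in fxE; rewrite fy_def in fyE; rewrite fz_def in fzE.
apply: E_F7_free (fano_induced_of_spokes _ exyz fxE fyE fzE).
rewrite /= !inE !negb_or xy xz yz xw yw zw !(eq_sym w) aw bw cw ab ac bc.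
by rewrite !(neq_off x) ?(neq_off y) ?(neq_off z).
Qed.

Lemma sum_deg_mul (g : V -> nat) :
  \sum_v deg E v * g v = \sum_(e in E) \sum_(v in e) g v.
Proof.
under eq_bigr do rewrite /deg card_set_cond big_distrl.
rewrite exchange_big; apply: eq_bigr => e _; rewrite [RHS]big_mkcond.
by apply: eq_bigr => v _; case: (v \in e) => /=; rewrite ?mul1n.
Qed.

Lemma sum_deg : \sum_v deg E v = 3 * #|E|.
Proof.
under eq_bigr do rewrite -[deg E _]muln1.
rewrite sum_deg_mul mulnC -sum_nat_const; apply: eq_bigr => e eE.
by rewrite sum1_card E_uniform.
Qed.

Lemma adj_card u v : adj E u v = #|[set e in E | (u \in e) && (v \in e :\ u)]| :> nat.
Proof.
have [<- | uv] := eqVneq u v.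
  rewrite /adj eqxx /=; apply/esym/eqP; rewrite cards_eq0; apply/eqP/setP => e.
  by rewrite !inE eqxx !andbF.
set S := [set e in E | _].
have S_le1 : #|S| <= 1.
  apply/card_le1_eqP => e f; rewrite !inE.
  move=> /and3P [eE ue /andP [_ ve]] /and3P [fE uf /andP [_ vf]].
  exact: edge_eq fE eE uv uf vf ue ve.
have S_gt0 : (0 < #|S|) = adj E u v.
  rewrite /adj uv card_gt0; apply/set0Pn/existsP.
    by case=> e; rewrite !inE => /and3P [eE ue /andP [_ ve]]; exists e; rewrite eE ue ve.
  by case=> e /and3P [eE ue ve]; exists e; rewrite !inE eE ue ve eq_sym uv.
by move: S_le1 S_gt0; case: (adj E u v); case: #|S| => [|[|]].
Qed.

Lemma sum_adj u : \sum_v adj E u v = 2 * deg E u.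
Proof.
under eq_bigr do rewrite adj_card card_set_cond.
rewrite exchange_big /deg card_set_cond big_distrr /=; apply: eq_bigr => e eE.
have [ue | uNe] := boolP (u \in e); last by rewrite big1 // => v _; rewrite (negbTE uNe).
by rewrite /= sum_mem_card; move: (E_uniform eE); rewrite (cardsD1 u) ue add1n => -[->].
Qed.

Lemma sum_deg_edge e : e \in E -> \sum_(v in e) deg E v <= #|V|.
Proof.
(* Both sides count pairs (v, u) with v in e adjacent to u; no u is adjacent to all of e. *)
move=> eE; rewrite -(leq_pmul2l (isT : 0 < 2)) big_distrr /=.
under eq_bigr do rewrite -sum_adj.
rewrite exchange_big /= mulnC -sum_nat_const; apply: leq_sum => u _.
have /card_gt1P [x [y [xe ye xy]]] : 1 < #|e| by rewrite E_uniform.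
have [z [e_def zx zy]] := edge_third eE xe ye xy.
have [xz yz] : x != z /\ y != z by rewrite !(eq_sym _ z).
rewrite e_def big_set3 //; rewrite e_def in eE.
move: (no_common_neighbour u eE xy xz yz).
by case: (adj E x u); case: (adj E y u); case: (adj E z u).
Qed.

Lemma card_edges_le : 9 * #|E| <= #|V| ^ 2.
Proof.
have [-> | E_gt0] := posnP #|E|; first by rewrite muln0.
have sum_deg_sq : \sum_v deg E v ^ 2 <= #|V| * #|E|.
  under eq_bigr do rewrite -mulnn.
  rewrite sum_deg_mul mulnC -sum_nat_const; apply: leq_sum => e eE.
  exact: sum_deg_edge.
rewrite -(leq_pmul2r E_gt0) -mulnA mulnn -[9]/(3 ^ 2) -expnMn -sum_deg.
apply: leq_trans (leq_sqr_sum _) _.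
by rewrite expnS expn1 -mulnA leq_mul2l sum_deg_sq orbT.
Qed.

End LinearTripleSystem.

(** * The extremal construction *)


Section ZeroSumTriples.

Variable G : finZmodType.
Implicit Types g : {ffun 'I_3 -> G}.

Lemma sum_ord3 (h : 'I_3 -> G) s t r : s != t -> s != r -> t != r ->
  (\sum_i h i = h s + h t + h r)%R.
Proof.
move=> st sr tr; have str : [set s; t; r] = [set: 'I_3].
  by apply/eqP; rewrite eqEcard subsetT cardsT card_ord card_set3.
by rewrite -big_set3 // str; apply: eq_bigl => i; rewrite in_setT.
Qed.

(* The vertex (i, a) lies in class i; the edges are the graphs {(0, a), (1, b), (2, c)} of the
   functions 'I_3 -> G with a + b + c = 0. *)
Definition graph3 (g : {ffun 'I_3 -> G}) : {set 'I_3 * G} := [set (t, g t) | t : 'I_3].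

Definition zero_sum_fun : {set {ffun 'I_3 -> G}} :=
  [set g : {ffun 'I_3 -> G} | (\sum_t g t == 0)%R].

Definition zero_sum_triples : {set {set 'I_3 * G}} := graph3 @: zero_sum_fun.

Lemma mem_graph3 g x : (x \in graph3 g) = (g x.1 == x.2).
Proof. by case: x => t a /=; apply/imsetP/eqP => [[t' _ [-> ->]] // | <-]; exists t. Qed.

Lemma graph3_inj : injective graph3.
Proof.
move=> g g' gg'; apply/ffunP => t.
have : (t, g t) \in graph3 g' by rewrite -gg' mem_graph3.
by rewrite mem_graph3 => /eqP.
Qed.

Lemma card_graph3 g : #|graph3 g| = 3.
Proof. by rewrite card_imset ?card_ord // => t t' []. Qed.

Lemma sum_graph3 g : (\sum_t g t = \sum_(x in graph3 g) x.2)%R.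
Proof. by rewrite big_imset /=; [apply: eq_bigl | move=> t t' _ _ []]. Qed.

Lemma zero_sum_triples_uniform : uniform3 zero_sum_triples.
Proof. by move=> e /imsetP [g _ ->]; rewrite card_graph3. Qed.

Lemma zero_sum_fun_eq g g' s t : g \in zero_sum_fun -> g' \in zero_sum_fun -> s != t ->
  g s = g' s -> g t = g' t -> g = g'.
Proof.
rewrite !inE => /eqP g_sum0 /eqP g'_sum0 st gs gt; apply/ffunP => r.
have [-> // | rs] := eqVneq r s; have [-> // | rt] := eqVneq r t.
have [sr tr] : s != r /\ t != r by rewrite !(eq_sym _ r).
have := etrans g_sum0 (esym g'_sum0).
by rewrite !(sum_ord3 _ st sr tr) gs gt => /addrI.
Qed.

Lemma zero_sum_triples_linear : linear_hg zero_sum_triples.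
Proof.
move=> _ _ /imsetP [g gZ ->] /imsetP [g' g'Z ->] gg'.
apply/card_le1_eqP => x y; rewrite !inE !mem_graph3.
move=> /andP [/eqP gx /eqP g'x] /andP [/eqP gy /eqP g'y].
have [xy1 | xy1] := eqVneq x.1 y.1.
  by case: x y gx gy xy1 {g'x g'y} => [t a] [t' b] /= <- <- ->.
have g_eq : g = g' by apply: (zero_sum_fun_eq gZ g'Z xy1); rewrite ?gx ?g'x ?gy ?g'y.
by rewrite g_eq eqxx in gg'.
Qed.

Lemma zero_sum_triples_fst_inj e : e \in zero_sum_triples -> {in e &, injective fst}.
Proof.
by case/imsetP => g _ -> [t a] [t' b]; rewrite !mem_graph3 /= => /eqP <- /eqP <- ->.
Qed.


Lemma mem_zero_sum_triples x y z : ([set x; y; z] \in zero_sum_triples) =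
  [&& x.1 != y.1, x.1 != z.1, y.1 != z.1 & (x.2 + y.2 + z.2 == 0)%R].
Proof.
apply/idP/idP => [exyz | /and4P [xy1 xz1 yz1 sum0]].
  have := uniq_of_card_set3 (zero_sum_triples_uniform exyz).
  rewrite /= !inE !negb_or andbT => /andP [/andP [xy xz] yz].
  have fst_inj := zero_sum_triples_fst_inj exyz.
  rewrite !(inj_in_eq fst_inj) ?inE ?eqxx ?orbT // xy xz yz /=.
  case/imsetP: exyz => g; rewrite inE => /eqP g_sum0 g_def.
  by rewrite -big_set3 // g_def -sum_graph3 g_sum0.
have [xy xz yz] : [/\ x != y, x != z & y != z].
  by split; [apply: contraNneq xy1 | apply: contraNneq xz1 | apply: contraNneq yz1] => ->.
pose g := [ffun t => if t == x.1 then x.2 else if t == y.1 then y.2 else z.2].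
have g_def : graph3 g = [set x; y; z].
  apply/esym/eqP; rewrite eqEcard card_graph3 card_set3 // leqnn andbT.
  apply/subsetP => v; rewrite !inE -orbA => /or3P [] /eqP ->; rewrite mem_graph3 ffunE /=.
  - by rewrite !eqxx.
  - by rewrite [y.1 == _]eq_sym (negbTE xy1) !eqxx.
  - by rewrite ![z.1 == _]eq_sym (negbTE xz1) (negbTE yz1) eqxx.
apply/imsetP; exists g => //.
by rewrite inE sum_graph3 g_def big_set3.
Qed.

Lemma zero_sum_triples_F7_free : ~ induced_sub F7 zero_sum_triples.
Proof.
case=> f [f_inj fE].
have fst_f_inj : injective (fun p => (f p).1).
  move=> p q; apply: contra_eq => pq.
  have [L LF /andP [pL qL]] := fano_line pq.
  have fL : f @: L \in zero_sum_triples by rewrite -fE.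
  by rewrite (inj_in_eq (zero_sum_triples_fst_inj fL)) ?imset_f // (inj_eq f_inj).
by move: (leq_card _ fst_f_inj); rewrite card_fano_pt card_ord.
Qed.

Lemma card_zero_sum_triples : #|zero_sum_triples| = #|G| ^ 2.
Proof.
rewrite card_in_imset; last by move=> g g' _ _ /graph3_inj.
pose extend (ab : G * G) : {ffun 'I_3 -> G} :=
  [ffun t => if t == O3 0 then ab.1 else if t == O3 1 then ab.2 else (- (ab.1 + ab.2))%R].
have extend_inj : injective extend.
  by move=> [a b] [a' b'] /ffunP e; move: (e (O3 0)) (e (O3 1)); rewrite !ffunE /= => -> ->.
have -> : zero_sum_fun = extend @: setT.
  apply/setP => g; rewrite inE (@sum_ord3 _ (O3 0) (O3 1) (O3 2)) //.
  apply/eqP/imsetP => [g_sum0 | [ab _ ->]]; last by rewrite !ffunE /= subrr.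
  exists (g (O3 0), g (O3 1)) => //; apply/ffunP => t; rewrite ffunE.
  case: (ord3_cases t) => -> //=.
  by apply/eqP; rewrite -addr_eq0 addrC g_sum0.
by rewrite card_imset // cardsT card_prod mulnn.
Qed.

Hypothesis G_char2 : forall a : G, (a + a = 0)%R.

Lemma zero_sum_triples_pasch_closed : pasch_closed zero_sum_triples.
Proof.
have solve (a b c : G) : (a + b + c = 0)%R -> b = (a + c)%R.
  by move=> abc; apply: (addrI (a + c)%R); rewrite G_char2 -abc addrAC.
move=> p1 p2 p3 p4 p5 p6 _; rewrite !mem_zero_sum_triples.
case/and4P => c12 c13 c23 /eqP/solve s2; case/and4P => c34 c35 c45 /eqP/solve s4.
case/and4P => c56 c51 c61 /eqP/solve s6.
have c2 : p2.1 = p5.1 by apply: (ord3_other_eq c13); rewrite // eq_sym.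
have c4 : p4.1 = p1.1 by apply: (ord3_other_eq c35); rewrite // eq_sym.
have c6 : p6.1 = p3.1 by apply: (ord3_other_eq c51); rewrite // eq_sym.
rewrite c2 c4 c6 c51 eq_sym c35 c13 s2 s4 s6 /= -!addrA (addrA p3.2) G_char2 add0r.
by rewrite (addrA p5.2) G_char2 add0r G_char2.
Qed.

End ZeroSumTriples.

Definition relabel (T V : finType) (phi : T -> V) (E : {set {set T}}) : {set {set V}} :=
  [set phi @: (e : {set T}) | e in E].

Section Relabel.

Variables (T V : finType) (phi : T -> V) (E : {set {set T}}).
Hypothesis phi_bij : bijective phi.

Lemma uniform3_relabel : uniform3 E -> uniform3 (relabel phi E).
Proof.
by move=> E_unif _ /imsetP [e eE ->]; rewrite card_imset ?E_unif //; apply: bij_inj.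
Qed.

Lemma linear_hg_relabel : linear_hg E -> linear_hg (relabel phi E).
Proof.
move=> E_lin _ _ /imsetP [e eE ->] /imsetP [f fE ->] ef.
rewrite -imsetI; last by move=> x y _ _; apply: bij_inj.
rewrite card_imset; last exact: bij_inj.
by apply: E_lin => //; apply: contra ef => /eqP ->.
Qed.

Lemma induced_sub_relabel (W : finType) (H : {set {set W}}) :
  induced_sub H (relabel phi E) -> induced_sub H E.
Proof.
case: phi_bij => psi phiK psiK [g [g_inj gH]]; exists (psi \o g); split.
  exact: inj_comp (can_inj psiK) g_inj.
move=> S; rewrite gH.
have -> : g @: S = phi @: ((psi \o g) @: S).
  by rewrite -imset_comp; apply: eq_imset => w /=; rewrite psiK.
by rewrite mem_imset //; apply: imset_inj; exact: can_inj phiK.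
Qed.

Lemma card_relabel : #|relabel phi E| = #|E|.
Proof. by rewrite card_imset //; apply: imset_inj; exact: bij_inj. Qed.

End Relabel.

Theorem theorem15 :
  (forall (n : nat) (E : {set {set 'I_n}}),
      uniform3 E -> linear_hg E ->
      ~ induced_sub W3 E -> ~ induced_sub F7 E ->
      9 * #|E| <= n ^ 2)
  /\
  (forall N : nat, exists n : nat, N <= n /\
     exists E : {set {set 'I_n}},
       [/\ uniform3 E, linear_hg E, ~ induced_sub W3 E, ~ induced_sub F7 E
         & 9 * #|E| = n ^ 2]).
Proof.
split=> [n E E_unif E_lin E_W3 E_F7 | N].
  by have := card_edges_le E_unif E_lin E_W3 E_F7; rewrite card_ord.
pose G : finZmodType := 'rV['F_2]_N; pose T : finType := ('I_3 * G)%type.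
have card_G : #|G| = 2 ^ N by rewrite card_mx card_Fp // mul1n.
have card_T : #|T| = 3 * 2 ^ N by rewrite card_prod card_ord card_G.
exists #|T|; split.
  by rewrite card_T (leq_trans (ltnW (ltn_expl N (isT : 1 < 2)))) ?leq_pmull.
have rank_bij := @enum_rank_bij T.
exists (relabel enum_rank (zero_sum_triples G)); split.
- exact/uniform3_relabel/zero_sum_triples_uniform.
- exact/linear_hg_relabel/zero_sum_triples_linear.
- move/induced_sub_relabel => /(_ rank_bij).
  exact/pasch_closed_W3_free/zero_sum_triples_pasch_closed/F2mx_addrr.
- by move/induced_sub_relabel => /(_ rank_bij); apply: zero_sum_triples_F7_free.
- by rewrite card_relabel // card_zero_sum_triples card_T card_G expnMn.
Qed.
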